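(* There exist finitely presented $2$-structures that are not Lambek coherent.
   Context: A $2$-structure $\mathcal{S}=\langle\mathcal{F},\theta_{\mathcal{F}},\mathcal{T},\theta_{\mathcal{T}}\rangle$ consists of a graded set $\mathcal{F}$ of function symbols, a set $\theta_{\mathcal{F}}$ of equations between terms, a set $\mathcal{T}$ of labelled reduction rules $\tau:[F(x_1,\dots,x_n)]\to[G(x_1,\dots,x_n)]$ between congruence classes of terms (each label for one source/target pair), and a set $\theta_{\mathcal{T}}$ of equations between reductions with the same source and target, where, over a category $\mathscr{C}$, reductions are generated from morphisms $[f]$ of $\mathscr{C}$ by applying function symbols $F(\varphi_1,\dots,\varphi_n)$, rules $\tau(\varphi_1,\dots,\varphi_n):[F(\bar s/\bar x)]\to[G(\bar t/\bar x)]$, and composition $\varphi\cdot\psi$; $\theta_{\mathcal{T}}$ always contains all instances of the identity, associativity, functoriality ($F(\varphi_i)\cdot F(\psi_i)=F(\varphi_i\cdot\psi_i)$) and naturality ($\varphi(\varphi_1,\dots)=s(\varphi_1,\dots)\cdot\varphi(t_1,\dots)=\varphi(s_1,\dots)\cdot t(\varphi_1,\dots)$ for $\varphi:s\to t$) equations. $\mathbb{F}_{\mathscr{C}}(\mathcal{S})$ is the category of classes of terms over $\mathrm{Ob}(\mathscr{C})$ and reductions modulo the congruence generated by $\theta_{\mathcal{T}}$. $\mathcal{S}$ is finitely presented if $\mathcal{F},\theta_{\mathcal{F}},\mathcal{T}$ and the non-mandatory equations in $\theta_{\mathcal{T}}$ are finite. A reduction is in general position if the number of distinct inherited morphisms $[f]$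 in it is maximal among all reductions of the same shape (the shape being the reduction with every inherited morphism replaced by a placeholder). $\mathcal{S}$ is Lambek coherent if, whenever $\mathscr{C}$ is a discrete category, it is decidable whether two reductions in general position with the same source and target are equal in $\mathbb{F}_{\mathscr{C}}(\mathcal{S})$. *)

From Stdlib Require Import List Arith.
Import ListNotations.
Set Implicit Arguments.

Inductive PR : Type :=
| PZero | PSucc | PProj (i : nat) | PComp (f : PR) (gs : list PR)
| PPrim (f g : PR) | PMu (f : PR).

Inductive eval : PR -> list nat -> nat -> Prop :=
| ev_zero v : eval PZero v 0
| ev_succ x v : eval PSucc (x :: v) (S x)
| ev_proj i v : i < length v -> eval (PProj i) v (nth i v 0)
| ev_comp f gs v ys y : evals gs v ys -> eval f ys y -> eval (PComp f gs) v y
| ev_prim0 f g v y : eval f v y -> eval (PPrim f g) (0 :: v) y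
| ev_primS f g n v r y : eval (PPrim f g) (n :: v) r -> eval g (n :: r :: v) y ->
    eval (PPrim f g) (S n :: v) y
| ev_mu f v n : eval f (n :: v) 0 ->
    (forall m, m < n -> exists k, eval f (m :: v) (S k)) -> eval (PMu f) v n
with evals : list PR -> list nat -> list nat -> Prop :=
| evs_nil v : evals [] v []
| evs_cons g gs v y ys : eval g v y -> evals gs v ys -> evals (g :: gs) v (y :: ys).

Definition cpair (x y : nat) : nat := (x + y) * (x + y + 1) / 2 + y.

Inductive term (A : Type) : Type :=
| tvar (a : A)
| tapp (f : nat) (args : list (term A)).
Arguments tvar {A} a.
Arguments tapp {A} f args.

Fixpoint tsubst {A B : Type} (s : A -> term B) (t : term A) : term B :=
  match t with
  | tvar a => s a
  | tapp f ts => tapp f (map (tsubst s) ts)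
  end.

Fixpoint tvars {A : Type} (t : term A) : list A :=
  match t with
  | tvar a => [a]
  | tapp _ ts => (fix go (l : list (term A)) : list A :=
                    match l with [] => [] | u :: l' => tvars u ++ go l' end) ts
  end.

Definition lsubst {A : Type} (ss : list (term A)) (t : term nat) : term A :=
  tsubst (fun k => nth k ss (tapp 0 [])) t.

(* raw reductions: leaves are inherited morphisms [1_a] of the discrete
   category (or variables, for schematic reductions); F(phis); tau(phis);
   composition phi . psi (diagrammatic order: first phi, then psi). *)
Inductive red (A : Type) : Type :=
| rleaf (a : A)
| rfun (f : nat) (args : list (red A))
| rrule (i : nat) (args : list (red A))
| rcomp (phi psi : red A).
Arguments rleaf {A} a.
Arguments rfun {A} f args.
Arguments rrule {A} i args.
Arguments rcomp {A} phi psi.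

Fixpoint ofterm {A : Type} (t : term A) : red A :=
  match t with
  | tvar a => rleaf a
  | tapp f ts => rfun f (map ofterm ts)
  end.

Fixpoint rsubst {A B : Type} (s : A -> red B) (r : red A) : red B :=
  match r with
  | rleaf a => s a
  | rfun f rs => rfun f (map (rsubst s) rs)
  | rrule i rs => rrule i (map (rsubst s) rs)
  | rcomp p q => rcomp (rsubst s p) (rsubst s q)
  end.

Definition shape {A : Type} (r : red A) : red unit :=
  rsubst (fun _ => rleaf tt) r.

Fixpoint leaves {A : Type} (r : red A) : list A :=
  let fix go (l : list (red A)) : list A :=
      match l with [] => [] | u :: l' => leaves u ++ go l' end in
  match r with
  | rleaf a => [a]
  | rfun _ rs => go rs
  | rrule _ rs => go rs
  | rcomp p q => leaves p ++ leaves q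
  end.

Fixpoint compfree {A : Type} (r : red A) : Prop :=
  let fix go (l : list (red A)) : Prop :=
      match l with [] => True | u :: l' => compfree u /\ go l' end in
  match r with
  | rleaf _ => True
  | rfun _ rs => go rs
  | rrule _ rs => go rs
  | rcomp _ _ => False
  end.

(* - function symbols are 0,...,length ar - 1, symbol f has arity nth f ar;
   - eqF : the (finitely many) equations of theta_F (terms in variables);
   - rules : the i-th entry (n, l, r) is the rule tau_i : [l(x_0..x_{n-1})]
     -> [r(x_0..x_{n-1})];
   - eqT : the finitely many non-mandatory equations of theta_T, between
     schematic reductions (leaves = variables).                          *)
Record FP2S : Type := {
  ar : list nat;
  eqF : list (term nat * term nat);
  rules : list (nat * term nat * term nat);
  eqT : list (red nat * red nat)
}.

Section Theory.
Variable S : FP2S.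

Fixpoint wft {A : Type} (t : term A) : Prop :=
  match t with
  | tvar _ => True
  | tapp f ts => f < length (ar S) /\ length ts = nth f (ar S) 0 /\
      (fix go (l : list (term A)) : Prop :=
         match l with [] => True | u :: l' => wft u /\ go l' end) ts
  end.

Inductive teq {A : Type} : term A -> term A -> Prop :=
| teq_refl t : wft t -> teq t t
| teq_sym t u : teq t u -> teq u t
| teq_trans t u v : teq t u -> teq u v -> teq t v
| teq_ax l r (s : nat -> term A) : In (l, r) (eqF S) -> (forall k, wft (s k)) ->
    teq (tsubst s l) (tsubst s r)
| teq_arg f pre post t u : teq t u -> wft (tapp f (pre ++ t :: post)) ->
    teq (tapp f (pre ++ t :: post)) (tapp f (pre ++ u :: post)).

(* typing of reductions: hastype phi s t  means  phi : [s] -> [t] *)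
Inductive hastype {A : Type} : red A -> term A -> term A -> Prop :=
| ht_leaf a : hastype (rleaf a) (tvar a) (tvar a)
| ht_fun f rs ss ts : f < length (ar S) -> length rs = nth f (ar S) 0 ->
    hastypes rs ss ts -> hastype (rfun f rs) (tapp f ss) (tapp f ts)
| ht_rule i n l r rs ss ts : nth_error (rules S) i = Some (n, l, r) ->
    length rs = n -> hastypes rs ss ts ->
    hastype (rrule i rs) (lsubst ss l) (lsubst ts r)
| ht_comp p q s t u : hastype p s t -> hastype q t u -> hastype (rcomp p q) s u
| ht_conv p s t s' t' : hastype p s t -> teq s s' -> teq t t' -> hastype p s' t'
with hastypes {A : Type} : list (red A) -> list (term A) -> list (term A) -> Prop :=
| hts_nil : hastypes [] [] []
| hts_cons p s t rs ss ts : hastype p s t -> hastypes rs ss ts ->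
    hastypes (p :: rs) (s :: ss) (t :: ts).

Definition typed {A : Type} (p : red A) : Prop := exists s t, hastype p s t.

(* generating equations of theta_T (mandatory ones and instances of eqT) *)
Inductive axiom {A : Type} : red A -> red A -> Prop :=
| ax_idl p s t : hastype p s t -> axiom (rcomp (ofterm s) p) p
| ax_idr p s t : hastype p s t -> axiom (rcomp p (ofterm t)) p
| ax_assoc p q r : axiom (rcomp (rcomp p q) r) (rcomp p (rcomp q r))
| ax_funct f ps qs : length ps = length qs ->
    axiom (rcomp (rfun f ps) (rfun f qs))
          (rfun f (map (fun pq => rcomp (fst pq) (snd pq)) (combine ps qs)))
| ax_nat (p : red nat) (s t : term nat) (P : nat -> red A) (sg tg : nat -> term A) :
    hastype p s t -> (forall k, hastype (P k) (sg k) (tg k)) ->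
    axiom (rcomp (rsubst P (ofterm s)) (rsubst (fun k => ofterm (tg k)) p))
          (rcomp (rsubst (fun k => ofterm (sg k)) p) (rsubst P (ofterm t)))
| ax_nat_mid (p : red nat) (s t : term nat) (P : nat -> red A) (sg tg : nat -> term A) :
    compfree p -> hastype p s t -> (forall k, hastype (P k) (sg k) (tg k)) ->
    axiom (rsubst P p)
          (rcomp (rsubst P (ofterm s)) (rsubst (fun k => ofterm (tg k)) p))
| ax_user l r (sg : nat -> term A) : In (l, r) (eqT S) -> (forall k, wft (sg k)) ->
    axiom (rsubst (fun k => ofterm (sg k)) l) (rsubst (fun k => ofterm (sg k)) r).

(* equality of morphisms in F_C(S): the congruence generated by theta_T *)
Inductive req {A : Type} : red A -> red A -> Prop :=
| req_refl p s t : hastype p s t -> req p p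
| req_sym p q : req p q -> req q p
| req_trans p q r : req p q -> req q r -> req p r
| req_ax p q s t : axiom p q -> hastype p s t -> hastype q s t -> req p q
| req_fun f pre post p q s t : req p q ->
    hastype (rfun f (pre ++ p :: post)) s t -> hastype (rfun f (pre ++ q :: post)) s t ->
    req (rfun f (pre ++ p :: post)) (rfun f (pre ++ q :: post))
| req_rule i pre post p q s t : req p q ->
    hastype (rrule i (pre ++ p :: post)) s t -> hastype (rrule i (pre ++ q :: post)) s t ->
    req (rrule i (pre ++ p :: post)) (rrule i (pre ++ q :: post))
| req_compl p p' q s t : req p p' -> hastype (rcomp p q) s t -> hastype (rcomp p' q) s t ->
    req (rcomp p q) (rcomp p' q)
| req_compr p q q' s t : req q q' -> hastype (rcomp p q) s t -> hastype (rcomp p q') s t ->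
    req (rcomp p q) (rcomp p q').

Definition WF2S : Prop :=
  (forall l r, In (l, r) (eqF S) -> wft l /\ wft r) /\
  (forall n l r, In (n, l, r) (rules S) ->
     wft l /\ wft r /\ (forall k, In k (tvars l) -> k < n)
                    /\ (forall k, In k (tvars r) -> k < n)) /\
  (forall l r, In (l, r) (eqT S) -> exists s t, hastype l s t /\ hastype r s t).

Definition ndist {A : Type} (l : list A) (k : nat) : Prop :=
  exists l', NoDup l' /\ (forall x, In x l' <-> In x l) /\ length l' = k.

Definition genpos {A : Type} (p : red A) : Prop :=
  typed p /\
  forall (q : red A) k k', typed q -> shape q = shape p ->
    ndist (leaves p) k -> ndist (leaves q) k' -> k' <= k.

Section Code.
Context {O : Type} (enc : O -> nat).
Fixpoint code (r : red O) : nat :=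
  let fix codes (l : list (red O)) : nat :=
      match l with [] => 0 | u :: l' => Nat.succ (cpair (code u) (codes l')) end in
  match r with
  | rleaf a => cpair 0 (enc a)
  | rfun f rs => cpair 1 (cpair f (codes rs))
  | rrule i rs => cpair 2 (cpair i (codes rs))
  | rcomp p q => cpair 3 (cpair (code p) (code q))
  end.
End Code.

(* Lambek coherence: for every discrete category C (a countable set O of
   objects, given with an injective coding), equality in F_C(S) of two
   reductions in general position with the same source and target is
   decidable, i.e. computed by a mu-recursive function on codes. *)
Definition LambekCoherent : Prop :=
  forall (O : Type) (enc : O -> nat), (forall a b, enc a = enc b -> a = b) ->
  exists prog : PR,
    forall (p q : red O) (s t : term O),
      genpos p -> genpos q -> hastype p s t -> hastype q s t ->
      (req p q -> eval prog [cpair (code enc p) (code enc q)] 1) /\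
      (~ req p q -> eval prog [cpair (code enc p) (code enc q)] 0).

End Theory.

From Stdlib Require Import List Arith Lia ClassicalEpsilon FunctionalExtensionality Classical.
Import ListNotations.
Set Implicit Arguments.

(* The 2-structure [S0] has function symbols for numerals, lists of numerals and codes of
   mu-recursive programs, and its term equations describe evaluation: EVAL(p, v) equals the
   numeral y whenever p computes y on v, and HALT sends every numeral to the constant TOP.
   It has two rules tau0, tau1 : GATE(x) -> GATE(x) and the single reduction equation
   tau0(1_TOP) = tau1(1_TOP).  Hence for the closed term u = HALT(EVAL(p, v)) the reductions
   tau0(1_u) and tau1(1_u) are equal as soon as p halts on v.  Conversely, interpreting terms
   as partial values (a model of the term equations), the parity of the number of tau1-steps
   whose argument does not denote TOP is invariant under the reduction equations, and it
   separates tau0(1_u) from tau1(1_u) unless p halts on v.  These reductions have no inherited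
   morphisms, hence are in general position, so a decider for their equality, working on
   codes, would decide whether a program halts on its own code; the usual diagonal argument
   rules this out. *)

Section TermInd.
Variables (A : Type) (P : term A -> Prop).
Hypothesis Hvar : forall a, P (tvar a).
Hypothesis Happ : forall f ts, Forall P ts -> P (tapp f ts).
Fixpoint term_nested_ind (t : term A) : P t :=
  match t with
  | tvar a => Hvar a
  | tapp f ts =>
      Happ f ((fix go (l : list (term A)) : Forall P l :=
                 match l with
                 | [] => Forall_nil _
                 | u :: l' => Forall_cons _ (term_nested_ind u) (go l')
                 end) ts)
  end.
End TermInd.

Section RedInd.
Variables (A : Type) (P : red A -> Prop).
Hypothesis Hleaf : forall a, P (rleaf a).
Hypothesis Hfun : forall f rs, Forall P rs -> P (rfun f rs).
Hypothesis Hrule : forall i rs, Forall P rs -> P (rrule i rs).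
Hypothesis Hcomp : forall p q, P p -> P q -> P (rcomp p q).
Fixpoint red_nested_ind (r : red A) : P r :=
  let fix go (l : list (red A)) : Forall P l :=
      match l with [] => Forall_nil _ | u :: l' => Forall_cons _ (red_nested_ind u) (go l') end in
  match r with
  | rleaf a => Hleaf a
  | rfun f rs => Hfun f (go rs)
  | rrule i rs => Hrule i (go rs)
  | rcomp p q => Hcomp (red_nested_ind p) (red_nested_ind q)
  end.
End RedInd.

Section PRInd.
Variable P : PR -> Prop.
Hypotheses (Hzero : P PZero) (Hsucc : P PSucc) (Hproj : forall i, P (PProj i))
  (Hcomp : forall f gs, P f -> Forall P gs -> P (PComp f gs))
  (Hprim : forall f g, P f -> P g -> P (PPrim f g)) (Hmu : forall f, P f -> P (PMu f)).
Fixpoint PR_nested_ind (p : PR) : P p :=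
  match p with
  | PZero => Hzero
  | PSucc => Hsucc
  | PProj i => Hproj i
  | PComp f gs =>
      Hcomp (PR_nested_ind f) ((fix go (l : list PR) : Forall P l :=
                                  match l with
                                  | [] => Forall_nil _
                                  | u :: l' => Forall_cons _ (PR_nested_ind u) (go l')
                                  end) gs)
  | PPrim f g => Hprim (PR_nested_ind f) (PR_nested_ind g)
  | PMu f => Hmu (PR_nested_ind f)
  end.
End PRInd.

(** * Partial functions computed by mu-recursive programs *)

Fixpoint eval_det p v y (H : eval p v y) {struct H} : forall y', eval p v y' -> y = y'
with evals_det gs v ys (H : evals gs v ys) {struct H} : forall ys', evals gs v ys' -> ys = ys'.
Proof.
  - destruct H as [v|x v|i v Hi|f gs v ys y Hgs Hf|f g v y Hf|f g n v r y Hr Hg|f v n H0 Hlt];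
      intros y' H'; inversion H'; subst; auto.
    + assert (ys = ys0) by (eapply evals_det; eauto); subst; eapply eval_det; eauto.
    + eapply eval_det; eauto.
    + assert (r = r0) by (eapply eval_det; eauto); subst; eapply eval_det; eauto.
    + match goal with Hlt' : forall m, m < y' -> _, H0' : eval f (y' :: v) 0 |- _ =>
        destruct (lt_eq_lt_dec n y') as [[Hny|]|Hyn]; auto;
        [destruct (Hlt' n Hny) as [k Hk]; pose proof (eval_det _ _ _ H0 _ Hk)
        |destruct (Hlt y' Hyn) as [k Hk]; pose proof (eval_det _ _ _ Hk _ H0')] end;
      discriminate.
  - destruct H as [v|g gs v y ys Hg Hgs]; intros ys' H'; inversion H'; subst; auto.
    f_equal; [eapply eval_det | eapply evals_det]; eauto.
Qed.

Definition some_witness {X : Type} (P : X -> Prop) : option X :=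
  match excluded_middle_informative (exists x, P x) with
  | left H => Some (proj1_sig (constructive_indefinite_description P H))
  | right _ => None
  end.

Lemma some_witness_some {X} (P : X -> Prop) x : some_witness P = Some x -> P x.
Proof.
  unfold some_witness; destruct excluded_middle_informative; intro E; inversion E.
  exact (proj2_sig _).
Qed.

Lemma some_witness_unique {X} (P : X -> Prop) x :
  P x -> (forall y, P y -> y = x) -> some_witness P = Some x.
Proof.
  intros Hx Hu; unfold some_witness; destruct excluded_middle_informative as [H|H].
  - f_equal; apply Hu; exact (proj2_sig _).
  - exfalso; eauto.
Qed.

Lemma some_witness_empty {X} (P : X -> Prop) : (forall x, ~ P x) -> some_witness P = None.
Proof.
  intros H; unfold some_witness; destruct excluded_middle_informative as [[x Hx]|]; auto.
  exfalso; exact (H x Hx).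
Qed.

Lemma option_ext {X} (a b : option X) : (forall x, a = Some x <-> b = Some x) -> a = b.
Proof.
  destruct a as [x|], b as [y|]; intro H; auto.
  - apply H; auto.
  - symmetry; apply H; auto.
  - apply H; auto.
Qed.

(* The semantics of [PMu], generalised to searches starting at [k] so that it satisfies the
   recursion [search_step]. *)
Definition least_zero_from (f : PR) (v : list nat) (k n : nat) : Prop :=
  k <= n /\ eval f (n :: v) 0 /\
  forall j, k <= j -> j < n -> exists m, eval f (j :: v) (S m).

Lemma least_zero_from_unique f v k n m :
  least_zero_from f v k n -> least_zero_from f v k m -> n = m.
Proof.
  intros [Hk1 [H1 H2]] [Hk2 [H3 H4]].
  destruct (lt_eq_lt_dec n m) as [[Hlt|]|Hlt]; auto.
  - destruct (H4 n Hk1 Hlt) as [k' Hk']; pose proof (eval_det H1 Hk'); discriminate.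
  - destruct (H2 m Hk2 Hlt) as [k' Hk']; pose proof (eval_det H3 Hk'); discriminate.
Qed.

Definition run (p : PR) (v : list nat) : option nat := some_witness (eval p v).
Definition runs (gs : list PR) (v : list nat) : option (list nat) := some_witness (evals gs v).
Definition search (f : PR) (v : list nat) (k : nat) : option nat :=
  some_witness (least_zero_from f v k).

Lemma run_spec p v y : run p v = Some y <-> eval p v y.
Proof.
  split; [apply some_witness_some|].
  intro H; apply some_witness_unique; auto; intros; eapply eval_det; eauto.
Qed.

Lemma runs_spec gs v ys : runs gs v = Some ys <-> evals gs v ys.
Proof.
  split; [apply some_witness_some|].
  intro H; apply some_witness_unique; auto; intros; eapply evals_det; eauto.
Qed.

Lemma search_spec f v k n : search f v k = Some n <-> least_zero_from f v k n.
Proof.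
  split; [apply some_witness_some|].
  intro H; apply some_witness_unique; auto; intros; eapply least_zero_from_unique; eauto.
Qed.

Lemma run_zero v : run PZero v = Some 0.
Proof. apply run_spec; constructor. Qed.

Lemma run_succ n v : run PSucc (n :: v) = Some (S n).
Proof. apply run_spec; constructor. Qed.

Lemma run_proj i v : run (PProj i) v = if i <? length v then Some (nth i v 0) else None.
Proof.
  apply option_ext; intro y; rewrite run_spec; split.
  - intro H; inversion H as [| |? ? Hi| | | |]; subst.
    apply Nat.ltb_lt in Hi; rewrite Hi; auto.
  - destruct (i <? length v) eqn:E; intro H; inversion H; subst.
    apply Nat.ltb_lt in E; constructor; auto.
Qed.

Lemma run_comp f gs v :
  run (PComp f gs) v = match runs gs v with Some ys => run f ys | None => None end.
Proof.
  apply option_ext; intro y; rewrite run_spec; split.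
  - intro H; inversion H as [| | |? ? ? ys ? Hgs Hf| | |]; subst.
    rewrite (proj2 (runs_spec _ _ _) Hgs); apply run_spec; auto.
  - destruct (runs gs v) eqn:E; intro H; [|discriminate].
    apply runs_spec in E; apply run_spec in H; econstructor; eauto.
Qed.

Lemma runs_nil v : runs [] v = Some [].
Proof. apply runs_spec; constructor. Qed.

Lemma runs_cons g gs v : runs (g :: gs) v =
  match run g v, runs gs v with Some y, Some ys => Some (y :: ys) | _, _ => None end.
Proof.
  apply option_ext; intro ys; rewrite runs_spec; split.
  - intro H; inversion H as [|? ? ? y ys' Hg Hgs]; subst.
    rewrite (proj2 (run_spec _ _ _) Hg), (proj2 (runs_spec _ _ _) Hgs); auto.
  - destruct (run g v) eqn:E1, (runs gs v) eqn:E2; intro H; try discriminate.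
    inversion H; subst; apply run_spec in E1; apply runs_spec in E2; constructor; auto.
Qed.

Lemma run_prim0 f g v : run (PPrim f g) (0 :: v) = run f v.
Proof.
  apply option_ext; intro y; rewrite !run_spec; split; intro H;
    [inversion H; subst; auto | constructor; auto].
Qed.

Lemma run_primS f g n v : run (PPrim f g) (S n :: v) =
  match run (PPrim f g) (n :: v) with Some r => run g (n :: r :: v) | None => None end.
Proof.
  apply option_ext; intro y; rewrite run_spec; split.
  - intro H; inversion H as [| | | | |? ? ? ? r ? Hr Hg|]; subst.
    rewrite (proj2 (run_spec _ _ _) Hr); apply run_spec; auto.
  - destruct (run (PPrim f g) (n :: v)) eqn:E; intro H; [|discriminate].
    apply run_spec in E; apply run_spec in H; econstructor; eauto.
Qed.

Lemma run_mu f v : run (PMu f) v = search f v 0.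
Proof.
  apply option_ext; intro y; rewrite run_spec, search_spec; unfold least_zero_from; split.
  - intro H; inversion H; subst; split; [lia|]; split; auto.
  - intros [_ [H1 H2]]; constructor; auto; intros m Hm; apply H2; auto; lia.
Qed.

Lemma search_step f v k : search f v k =
  match run f (k :: v) with Some 0 => Some k | Some (S _) => search f v (S k) | None => None end.
Proof.
  destruct (run f (k :: v)) as [[|m]|] eqn:E; apply run_spec in E || idtac.
  - apply search_spec; repeat split; auto; intros; lia.
  - apply option_ext; intro n; rewrite !search_spec; unfold least_zero_from; split.
    + intros [H1 [H2 H3]]; destruct (Nat.eq_dec k n) as [->|Hne].
      * pose proof (eval_det E H2); discriminate.
      * repeat split; auto; [lia|]; intros j Hj Hj'; apply H3; lia.
    + intros [H1 [H2 H3]]; repeat split; auto; [lia|]; intros j Hj Hj'.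
      destruct (Nat.eq_dec j k) as [->|]; eauto; apply H3; lia.
  - apply some_witness_empty; intros n [H1 [H2 H3]].
    destruct (Nat.eq_dec k n) as [->|Hne].
    + apply run_spec in H2; congruence.
    + destruct (H3 k) as [m Hm]; try lia; apply run_spec in Hm; congruence.
Qed.

(** * The 2-structure *)

Notation ZERO := (tapp 0 []).
Notation SUCC n := (tapp 1 [n]).
Notation NIL := (tapp 2 []).
Notation CONS n l := (tapp 3 [n; l]).
Notation P_ZERO := (tapp 4 []).
Notation P_SUCC := (tapp 5 []).
Notation P_PROJ i := (tapp 6 [i]).
Notation P_COMP f gs := (tapp 7 [f; gs]).
Notation P_PRIM f g := (tapp 8 [f; g]).
Notation P_MU f := (tapp 9 [f]).
Notation P_NIL := (tapp 10 []).
Notation P_CONS g gs := (tapp 11 [g; gs]).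
Notation EVAL p l := (tapp 12 [p; l]).
Notation EVALS gs l := (tapp 13 [gs; l]).
Notation NTH i l := (tapp 14 [i; l]).
Notation SEARCH f l k := (tapp 15 [f; l; k]).
Notation SEARCH_TEST b f l k := (tapp 16 [b; f; l; k]).
Notation SEQ c x := (tapp 17 [c; x]).
Notation CHK_NUM n := (tapp 18 [n]).
Notation CHK_LIST l := (tapp 19 [l]).
Notation CHK_PROG p := (tapp 20 [p]).
Notation CHK_PROGS gs := (tapp 21 [gs]).
Notation HALT n := (tapp 22 [n]).
Notation TOP := (tapp 23 []).
Notation GATE x := (tapp 24 [x]).
Notation AND a b := (tapp 25 [a; b]).
Notation COPY n := (tapp 26 [n]).
Notation NIL_IF c := (tapp 27 [c]).

Definition arities : list nat :=
  [0; 1; 0; 2; 0; 0; 1; 2; 2; 1; 0; 2; 2; 2; 2; 3; 4; 2; 1; 1; 1; 1; 1; 0; 1; 2; 1; 1].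

Notation "'V' k" := (@tvar nat k) (at level 0, k at level 0).

Definition eq_eval_zero : term nat * term nat := (EVAL P_ZERO (V 0), CHK_LIST (V 0)).
Definition eq_eval_succ : term nat * term nat :=
  (EVAL P_SUCC (CONS (V 0) (V 1)), SEQ (CHK_LIST (V 1)) (SUCC (V 0))).
Definition eq_eval_proj : term nat * term nat := (EVAL (P_PROJ (V 0)) (V 1), NTH (V 0) (V 1)).
Definition eq_nth_zero : term nat * term nat :=
  (NTH ZERO (CONS (V 0) (V 1)), SEQ (CHK_LIST (V 1)) (V 0)).
Definition eq_nth_succ : term nat * term nat :=
  (NTH (SUCC (V 2)) (CONS (V 0) (V 1)), SEQ (CHK_NUM (V 0)) (NTH (V 2) (V 1))).
Definition eq_eval_comp : term nat * term nat :=
  (EVAL (P_COMP (V 0) (V 1)) (V 2), EVAL (V 0) (EVALS (V 1) (V 2))).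
Definition eq_evals_nil : term nat * term nat := (EVALS P_NIL (V 0), NIL_IF (CHK_LIST (V 0))).
Definition eq_evals_cons : term nat * term nat :=
  (EVALS (P_CONS (V 0) (V 1)) (V 2), CONS (EVAL (V 0) (V 2)) (EVALS (V 1) (V 2))).
Definition eq_eval_prim_zero : term nat * term nat :=
  (EVAL (P_PRIM (V 0) (V 1)) (CONS ZERO (V 2)), SEQ (CHK_PROG (V 1)) (EVAL (V 0) (V 2))).
Definition eq_eval_prim_succ : term nat * term nat :=
  (EVAL (P_PRIM (V 0) (V 1)) (CONS (SUCC (V 3)) (V 2)),
   EVAL (V 1) (CONS (V 3) (CONS (EVAL (P_PRIM (V 0) (V 1)) (CONS (V 3) (V 2))) (V 2)))).
Definition eq_eval_mu : term nat * term nat := (EVAL (P_MU (V 0)) (V 1), SEARCH (V 0) (V 1) ZERO).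
Definition eq_search : term nat * term nat :=
  (SEARCH (V 0) (V 1) (V 2), SEARCH_TEST (EVAL (V 0) (CONS (V 2) (V 1))) (V 0) (V 1) (V 2)).
Definition eq_search_found : term nat * term nat :=
  (SEARCH_TEST ZERO (V 0) (V 1) (V 2), COPY (V 2)).
Definition eq_search_next : term nat * term nat :=
  (SEARCH_TEST (SUCC (V 3)) (V 0) (V 1) (V 2),
   SEQ (CHK_NUM (V 3)) (SEARCH (V 0) (V 1) (SUCC (V 2)))).
Definition eq_seq : term nat * term nat := (SEQ ZERO (V 0), COPY (V 0)).
Definition eq_copy_zero : term nat * term nat := (COPY ZERO, ZERO).
Definition eq_copy_succ : term nat * term nat := (COPY (SUCC (V 0)), SUCC (COPY (V 0))).
Definition eq_chk_num_zero : term nat * term nat := (CHK_NUM ZERO, ZERO).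
Definition eq_chk_num_succ : term nat * term nat := (CHK_NUM (SUCC (V 0)), CHK_NUM (V 0)).
Definition eq_chk_list_nil : term nat * term nat := (CHK_LIST NIL, ZERO).
Definition eq_chk_list_cons : term nat * term nat :=
  (CHK_LIST (CONS (V 0) (V 1)), AND (CHK_NUM (V 0)) (CHK_LIST (V 1))).
Definition eq_and : term nat * term nat := (AND ZERO ZERO, ZERO).
Definition eq_chk_prog_zero : term nat * term nat := (CHK_PROG P_ZERO, ZERO).
Definition eq_chk_prog_succ : term nat * term nat := (CHK_PROG P_SUCC, ZERO).
Definition eq_chk_prog_proj : term nat * term nat := (CHK_PROG (P_PROJ (V 0)), CHK_NUM (V 0)).
Definition eq_chk_prog_comp : term nat * term nat :=
  (CHK_PROG (P_COMP (V 0) (V 1)), AND (CHK_PROG (V 0)) (CHK_PROGS (V 1))).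
Definition eq_chk_prog_prim : term nat * term nat :=
  (CHK_PROG (P_PRIM (V 0) (V 1)), AND (CHK_PROG (V 0)) (CHK_PROG (V 1))).
Definition eq_chk_prog_mu : term nat * term nat := (CHK_PROG (P_MU (V 0)), CHK_PROG (V 0)).
Definition eq_chk_progs_nil : term nat * term nat := (CHK_PROGS P_NIL, ZERO).
Definition eq_chk_progs_cons : term nat * term nat :=
  (CHK_PROGS (P_CONS (V 0) (V 1)), AND (CHK_PROG (V 0)) (CHK_PROGS (V 1))).
Definition eq_nil_if : term nat * term nat := (NIL_IF ZERO, NIL).
Definition eq_halt_zero : term nat * term nat := (HALT ZERO, TOP).
Definition eq_halt_succ : term nat * term nat := (HALT (SUCC (V 0)), HALT (V 0)).

Definition program_equations : list (term nat * term nat) :=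
  [eq_eval_zero; eq_eval_succ; eq_eval_proj; eq_nth_zero; eq_nth_succ; eq_eval_comp;
   eq_evals_nil; eq_evals_cons; eq_eval_prim_zero; eq_eval_prim_succ; eq_eval_mu;
   eq_search; eq_search_found; eq_search_next; eq_seq; eq_copy_zero; eq_copy_succ;
   eq_chk_num_zero; eq_chk_num_succ; eq_chk_list_nil; eq_chk_list_cons; eq_and;
   eq_chk_prog_zero; eq_chk_prog_succ; eq_chk_prog_proj; eq_chk_prog_comp;
   eq_chk_prog_prim; eq_chk_prog_mu; eq_chk_progs_nil; eq_chk_progs_cons; eq_nil_if;
   eq_halt_zero; eq_halt_succ].

Definition gate_rule {A} (i : nat) (u : term A) : red A := rrule i [ofterm u].

Definition S0 : FP2S := {|
  ar := arities;
  eqF := program_equations;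
  rules := [(1, GATE (V 0), GATE (V 0)); (1, GATE (V 0), GATE (V 0))];
  eqT := [(gate_rule 0 TOP, gate_rule 1 TOP)]
|}.

(** * A model of the term equations *)

Inductive value := vN (n : nat) | vL (l : list nat) | vP (p : PR) | vPL (l : list PR) | vTop.

Definition dsucc (d : option value) : option value :=
  match d with Some (vN n) => Some (vN (S n)) | _ => None end.
Definition dcopy (d : option value) : option value :=
  match d with Some (vN n) => Some (vN n) | _ => None end.
Definition dsearch (f l k : option value) : option value :=
  match f, l, k with
  | Some (vP f), Some (vL l), Some (vN k) => option_map vN (search f l k)
  | _, _, _ => None
  end.

(* Terms denote partial values, [None] being "undefined".  The CHK_ symbols and SEQ exist so
   that both sides of each equation of [S0] are undefined on the same ill-sorted arguments. *)
Definition sem (f : nat) (args : list (option value)) : option value :=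
  match f, args with
  | 0, [] => Some (vN 0)
  | 1, [n] => dsucc n
  | 2, [] => Some (vL [])
  | 3, [Some (vN n); Some (vL l)] => Some (vL (n :: l))
  | 4, [] => Some (vP PZero)
  | 5, [] => Some (vP PSucc)
  | 6, [Some (vN i)] => Some (vP (PProj i))
  | 7, [Some (vP f); Some (vPL gs)] => Some (vP (PComp f gs))
  | 8, [Some (vP f); Some (vP g)] => Some (vP (PPrim f g))
  | 9, [Some (vP f)] => Some (vP (PMu f))
  | 10, [] => Some (vPL [])
  | 11, [Some (vP g); Some (vPL gs)] => Some (vPL (g :: gs))
  | 12, [Some (vP p); Some (vL l)] => option_map vN (run p l)
  | 13, [Some (vPL gs); Some (vL l)] => option_map vL (runs gs l)
  | 14, [Some (vN i); Some (vL l)] => if i <? length l then Some (vN (nth i l 0)) else None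
  | 15, [f; l; k] => dsearch f l k
  | 16, [Some (vN 0); f; l; k] => dcopy k
  | 16, [Some (vN (S _)); f; l; k] => dsearch f l (dsucc k)
  | 17, [Some (vN 0); x] => dcopy x
  | 18, [Some (vN _)] => Some (vN 0)
  | 19, [Some (vL _)] => Some (vN 0)
  | 20, [Some (vP _)] => Some (vN 0)
  | 21, [Some (vPL _)] => Some (vN 0)
  | 22, [Some (vN _)] => Some vTop
  | 23, [] => Some vTop
  | 24, [x] => x
  | 25, [Some (vN 0); Some (vN 0)] => Some (vN 0)
  | 26, [n] => dcopy n
  | 27, [Some (vN 0)] => Some (vL [])
  | _, _ => None
  end.

Fixpoint interp {A : Type} (rho : A -> option value) (t : term A) : option value :=
  match t with
  | tvar a => rho a
  | tapp f ts => sem f (map (interp rho) ts)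
  end.

Ltac split_values rho :=
  repeat match goal with
  | |- context [rho ?k] => destruct (rho k) as [[?n|?l|?p|?ps|]|]
  end.

Ltac split_numerals :=
  repeat match goal with
  | |- context [match ?n with 0 => _ | S _ => _ end] => destruct n
  end.

Ltac split_runs :=
  repeat (simpl; match goal with
  | |- context [run ?p ?v] => destruct (run p v)
  | |- context [runs ?gs ?v] => destruct (runs gs v)
  | |- context [search ?f ?v ?k] => destruct (search f v k)
  end).

Lemma program_equations_sound :
  Forall (fun e => forall rho : nat -> option value, interp rho (fst e) = interp rho (snd e))
    program_equations.
Proof.
  repeat constructor; intro rho; simpl; split_values rho; simpl; split_numerals;
    try reflexivity.
  all: first [ rewrite run_zero | rewrite run_succ | rewrite run_proj | rewrite run_comp
             | rewrite runs_nil | rewrite runs_cons | rewrite run_prim0 | rewrite run_primS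
             | rewrite run_mu | rewrite search_step | idtac ];
    split_runs; simpl; split_numerals; unfold Nat.ltb; simpl;
    repeat match goal with |- context [if ?b then _ else _] => destruct b end;
    reflexivity.
Qed.

Lemma interp_tsubst {A B} (rho : B -> option value) (s : A -> term B) (t : term A) :
  interp rho (tsubst s t) = interp (fun k => interp rho (s k)) t.
Proof.
  induction t using term_nested_ind; simpl; auto.
  f_equal; rewrite map_map; apply map_ext_in; intros u Hu.
  rewrite Forall_forall in H; auto.
Qed.

Lemma teq_sound {A} (t u : term A) : teq S0 t u -> forall rho, interp rho t = interp rho u.
Proof.
  induction 1 as [| |t u v _ IH1 _ IH2|l r s Hin _|f pre post t u _ IH _]; intros rho;
    simpl; try congruence.
  - rewrite !interp_tsubst.
    exact (proj1 (Forall_forall _ _) program_equations_sound _ Hin _).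
  - rewrite !map_app; simpl; rewrite IH; auto.
Qed.

(** * An invariant of the reduction equations *)

Definition head_var {A} (t : term A) : option A :=
  match t with tvar a => Some a | tapp _ _ => None end.

Lemma teq_head_var {A} (t u : term A) : teq S0 t u -> head_var t = head_var u.
Proof.
  induction 1 as [| | |l r s Hin _|]; simpl; try congruence.
  assert (Happ : forall e, In e program_equations ->
                  head_var (fst e) = None /\ head_var (snd e) = None)
    by (intros e He; simpl in He; repeat destruct He as [<-|He]; easy).
  destruct (Happ _ Hin) as [Hl Hr]; simpl in Hl, Hr.
  destruct l; [discriminate|]; destruct r; [discriminate|]; reflexivity.
Qed.

(* A source of [r] read off syntactically; this relies on both rules of [S0] having source
   [GATE (V 0)]. *)
Fixpoint syn_src {A} (r : red A) : term A :=
  match r with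
  | rleaf a => tvar a
  | rfun f rs => tapp f (map syn_src rs)
  | rrule _ rs => tapp 24 (map syn_src rs)
  | rcomp p _ => syn_src p
  end.

Definition not_top (d : option value) : bool := match d with Some vTop => false | _ => true end.

Fixpoint tau1_parity {A} (rho : A -> option value) (r : red A) : bool :=
  match r with
  | rrule 1 [r1] => not_top (interp rho (syn_src r1))
  | rcomp p q => xorb (tau1_parity rho p) (tau1_parity rho q)
  | _ => false
  end.

Fixpoint leaf_parity {A} (r : red A) (f : A -> bool) : bool :=
  match r with
  | rleaf a => f a
  | rcomp p q => xorb (leaf_parity p f) (leaf_parity q f)
  | _ => false
  end.

Lemma syn_src_rsubst {A B} (s : A -> red B) (r : red A) :
  syn_src (rsubst s r) = tsubst (fun k => syn_src (s k)) (syn_src r).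
Proof.
  induction r using red_nested_ind; simpl; auto; f_equal; rewrite !map_map;
    apply map_ext_in; intros; rewrite Forall_forall in H; auto.
Qed.

Lemma syn_src_ofterm {A} (t : term A) : syn_src (ofterm t) = t.
Proof.
  induction t using term_nested_ind; simpl; auto; f_equal; rewrite map_map.
  rewrite <- (map_id ts) at 2; apply map_ext_in; intros; rewrite Forall_forall in H; auto.
Qed.

Lemma tau1_parity_rsubst {A B} (rho : B -> option value) (s : A -> red B) (p : red A) :
  tau1_parity rho (rsubst s p) =
  xorb (leaf_parity p (fun k => tau1_parity rho (s k)))
       (tau1_parity (fun k => interp rho (syn_src (s k))) p).
Proof.
  induction p as [a|f rs|i args|p1 IHp1 p2 IHp2]; simpl.
  - destruct (tau1_parity rho (s a)); auto.
  - auto.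
  - destruct i as [|[|i]]; auto; destruct args as [|r1 [|]]; auto; simpl.
    rewrite syn_src_rsubst, interp_tsubst; auto.
  - rewrite IHp1, IHp2.
    destruct (leaf_parity p1 _), (leaf_parity p2 _), (tau1_parity _ p1), (tau1_parity _ p2); auto.
Qed.

Lemma tau1_parity_ofterm {A} rho (t : term A) : tau1_parity rho (ofterm t) = false.
Proof. destruct t; auto. Qed.

Lemma leaf_parity_false {A} (p : red A) : leaf_parity p (fun _ => false) = false.
Proof. induction p; simpl; auto; rewrite IHp1, IHp2; auto. Qed.

Lemma leaf_parity_compfree {A} (p : red A) f : compfree p ->
  leaf_parity p f = match head_var (syn_src p) with Some k => f k | None => false end.
Proof. destruct p; simpl; auto; contradiction. Qed.

Lemma tau1_parity_subst_ofterm {A} rho (P : nat -> red A) (s : term nat) :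
  tau1_parity rho (rsubst P (ofterm s)) =
  match head_var s with Some k => tau1_parity rho (P k) | None => false end.
Proof. destruct s; auto. Qed.

Lemma tau1_parity_rsubst_ofterm {A} rho (g : nat -> term A) (p : red nat) :
  tau1_parity rho (rsubst (fun k => ofterm (g k)) p) = tau1_parity (fun k => interp rho (g k)) p.
Proof.
  rewrite tau1_parity_rsubst.
  replace (fun k => tau1_parity rho (ofterm (g k))) with (fun _ : nat => false)
    by (extensionality k; symmetry; apply tau1_parity_ofterm).
  rewrite leaf_parity_false; simpl.
  do 2 f_equal; extensionality k; rewrite syn_src_ofterm; auto.
Qed.

Scheme hastype_mut_ind := Induction for hastype Sort Prop
  with hastypes_mut_ind := Induction for hastypes Sort Prop.

Lemma hastype_interp_syn_src {A} (p : red A) s t : hastype S0 p s t ->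
  forall rho, interp rho (syn_src p) = interp rho s /\ interp rho (syn_src p) = interp rho t.
Proof.
  intros H rho.
  induction H using hastype_mut_ind with
    (P0 := fun rs ss ts _ => map (fun r => interp rho (syn_src r)) rs = map (interp rho) ss /\
                             map (fun r => interp rho (syn_src r)) rs = map (interp rho) ts);
    simpl; try rewrite map_map;
    repeat match goal with IH : _ /\ _ |- _ => destruct IH end; try (split; congruence).
  - assert (l = GATE (V 0) /\ r = GATE (V 0) /\ n = 1) as [-> [-> ->]]
      by (destruct i as [|[|[|i]]]; simpl in e; inversion e; auto).
    destruct rs as [|r1 [|]], ss as [|s1 [|]], ts as [|t1 [|]]; simpl in *;
      try discriminate; split; congruence.
  - match goal with Hs : teq _ s _, Ht : teq _ t _ |- _ =>
      rewrite <- (teq_sound Hs rho), <- (teq_sound Ht rho) end; auto.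
Qed.

Lemma hastype_head_var {A} (p : red A) s t : hastype S0 p s t ->
  head_var s = head_var (syn_src p) /\ head_var t = head_var (syn_src p).
Proof.
  induction 1 as [| |i n l r rs ss ts E| |p0 s0 t0 s1 t1 _ [IH1 IH2] Hs Ht]; simpl; auto.
  - destruct i as [|[|[|i]]]; simpl in E; inversion E; subst; auto.
  - intuition congruence.
  - apply teq_head_var in Hs, Ht; split; congruence.
Qed.

Lemma axiom_tau1_parity {A} (p q : red A) :
  axiom S0 p q -> forall rho, tau1_parity rho p = tau1_parity rho q.
Proof.
  intros Hax rho;
    destruct Hax as [p1 ? ? ?|p1 ? ? ?|p1 p2 p3| |p1 s t P sg tg Hp HP|p1 s t P sg tg Hc Hp HP|];
    simpl; rewrite ?tau1_parity_ofterm.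
  - reflexivity.
  - destruct (tau1_parity rho p1); auto.
  - destruct (tau1_parity rho p1), (tau1_parity rho p2), (tau1_parity rho p3); auto.
  - reflexivity.
  - rewrite !tau1_parity_subst_ofterm, !tau1_parity_rsubst_ofterm.
    destruct (hastype_head_var Hp) as [-> ->].
    replace (fun k => interp rho (tg k)) with (fun k => interp rho (sg k))
      by (extensionality k; destruct (hastype_interp_syn_src (HP k) rho); congruence).
    apply Bool.xorb_comm.
  - rewrite tau1_parity_rsubst, tau1_parity_subst_ofterm, tau1_parity_rsubst_ofterm,
      (leaf_parity_compfree p1 _ Hc), (proj1 (hastype_head_var Hp)).
    do 2 f_equal; extensionality k; destruct (hastype_interp_syn_src (HP k) rho); congruence.
  - simpl in H; destruct H as [H|[]]; inversion H; subst; reflexivity.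
Qed.

Lemma req_invariant {A} (p q : red A) : req S0 p q ->
  forall rho, tau1_parity rho p = tau1_parity rho q /\
              interp rho (syn_src p) = interp rho (syn_src q).
Proof.
  induction 1 as [p0 ? ? ?|p0 q0 _ IH|p q r _ IH1 _ IH2|p q s t Hax Hp Hq
    |f pre post p q s t _ IH _ _|i pre post p q s t _ IH _ _|p p' q s t _ IH _ _
    |p q q' s t _ IH _ _]; intros rho.
  - auto.
  - destruct (IH rho); split; congruence.
  - destruct (IH1 rho), (IH2 rho); split; congruence.
  - split; [apply axiom_tau1_parity; auto|].
    destruct (hastype_interp_syn_src Hp rho), (hastype_interp_syn_src Hq rho); congruence.
  - destruct (IH rho) as [_ E]; simpl; rewrite !map_app; simpl; rewrite E; auto.
  - destruct (IH rho) as [_ E]; simpl; rewrite !map_app; simpl.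
    destruct i as [|[|i]], pre as [|? []], post; simpl; rewrite ?E; auto.
  - destruct (IH rho) as [E1 E2]; simpl; rewrite E1; auto.
  - destruct (IH rho) as [E _]; simpl; rewrite E; auto.
Qed.

(** * Well-formed terms and congruence *)

Section WellFormed.
Variable S : FP2S.

Lemma wft_app_iff {A} f (ts : list (term A)) :
  wft S (tapp f ts) <-> f < length (ar S) /\ length ts = nth f (ar S) 0 /\ Forall (wft S) ts.
Proof.
  simpl; split; intros [H1 [H2 H3]]; repeat split; auto; clear H1 H2.
  - induction ts; constructor; destruct H3; auto.
  - induction H3; simpl; auto.
Qed.

Lemma wft_tsubst {A B} (s : A -> term B) (t : term A) :
  wft S t -> (forall k, wft S (s k)) -> wft S (tsubst s t).
Proof.
  induction t using term_nested_ind; simpl tsubst; intros Hw Hs; auto.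
  apply wft_app_iff in Hw as [H1 [H2 H3]]; apply wft_app_iff.
  rewrite length_map; repeat split; auto.
  rewrite Forall_forall in *; intros x Hx; apply in_map_iff in Hx as [y [<- Hy]]; auto.
Qed.

Lemma hastype_ofterm {A} (t : term A) : wft S t -> hastype S (ofterm t) t t.
Proof.
  induction t using term_nested_ind; intros Hw; [constructor|].
  apply wft_app_iff in Hw as [H1 [H2 H3]]; simpl; apply ht_fun; auto.
  - rewrite length_map; auto.
  - clear H1 H2; induction ts; simpl; constructor; inversion H; inversion H3; subst; auto.
Qed.

Hypothesis eqF_wft : forall l r, In (l, r) (eqF S) -> wft S l /\ wft S r.

Lemma teq_wft {A} (t u : term A) : teq S t u -> wft S t /\ wft S u.
Proof.
  induction 1 as [t Hw| | |l r s Hin Hs|f pre post t u _ IH Hw]; try tauto.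
  - destruct (eqF_wft l r Hin); split; apply wft_tsubst; auto.
  - split; auto; apply wft_app_iff in Hw as [W1 [W2 W3]]; apply wft_app_iff.
    rewrite length_app in *; simpl in *; repeat split; auto.
    apply Forall_app in W3 as [W3 W4]; inversion W4; subst.
    apply Forall_app; split; auto; constructor; tauto.
Qed.

Lemma teq_cong {A} f (ts us : list (term A)) : f < length (ar S) -> length ts = nth f (ar S) 0 ->
  Forall2 (teq S) ts us -> teq S (tapp f ts) (tapp f us).
Proof.
  intros Hf Hl H.
  assert (Hpre : forall pre, wft S (tapp f (pre ++ ts)) ->
                 teq S (tapp f (pre ++ ts)) (tapp f (pre ++ us))).
  { clear Hf Hl; induction H as [|t u ts us Htu _ IH]; intros pre Hw.
    - rewrite app_nil_r in *; apply teq_refl; auto.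
    - eapply teq_trans; [apply (teq_arg pre ts Htu Hw)|].
      replace (pre ++ u :: ts) with ((pre ++ [u]) ++ ts) by (rewrite <- app_assoc; auto).
      replace (pre ++ u :: us) with ((pre ++ [u]) ++ us) by (rewrite <- app_assoc; auto).
      apply IH; rewrite <- app_assoc; apply (teq_wft (teq_arg pre ts Htu Hw)). }
  apply (Hpre []); apply wft_app_iff; repeat split; auto.
  clear -H eqF_wft; induction H as [|t u ts us Htu _ IH]; constructor; auto.
  apply (teq_wft Htu).
Qed.

Lemma req_ofterm {A} (u v : term A) : teq S u v -> req S (ofterm u) (ofterm v).
Proof.
  intros H; destruct (teq_wft H) as [Wu Wv].
  assert (Hu : hastype S (ofterm u) u v).
  { eapply ht_conv; [apply hastype_ofterm, Wu | apply teq_refl, Wu | exact H]. }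
  assert (Hv : hastype S (ofterm v) u v).
  { eapply ht_conv; [apply hastype_ofterm, Wv | apply teq_sym, H | apply teq_refl, Wv]. }
  assert (Huv : hastype S (rcomp (ofterm u) (ofterm v)) u v)
    by exact (ht_comp (hastype_ofterm _ Wu) Hv).
  apply req_trans with (rcomp (ofterm u) (ofterm v)).
  - exact (req_sym (req_ax (ax_idr Hu) Huv Hu)).
  - exact (req_ax (ax_idl Hv) Huv Hv).
Qed.

End WellFormed.


(** * Evaluation is derivable from the term equations *)

Lemma program_equations_wft l r : In (l, r) (eqF S0) -> wft S0 l /\ wft S0 r.
Proof.
  intros H; simpl in H; repeat destruct H as [H|H]; try contradiction;
    inversion H; subst; split; simpl; repeat split; lia.
Qed.

Ltac in_program_equations :=
  unfold program_equations; simpl; repeat first [left; reflexivity | right].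

Lemma teq_program_equation {A} e (ts : list (term A)) :
  In e program_equations -> Forall (wft S0) ts ->
  teq S0 (lsubst ts (fst e)) (lsubst ts (snd e)).
Proof.
  destruct e as [l r]; intros Hin Hw; apply teq_ax; [exact Hin|]; intros j.
  destruct (nth_in_or_default j ts ZERO) as [Hj | ->].
  - rewrite Forall_forall in Hw; auto.
  - apply wft_app_iff; simpl; repeat split; auto; lia.
Qed.

Create HintDb wft.

Ltac wf := repeat match goal with
  | |- Forall _ _ => constructor
  | |- wft S0 (tapp _ _) => apply wft_app_iff; split; [simpl; lia | split; [reflexivity|]]
  | |- wft S0 _ => solve [auto with wft]
  end.

Section Quote.
Context {A : Type}.

Fixpoint numeral (n : nat) : term A := match n with 0 => ZERO | S n => SUCC (numeral n) end.

Fixpoint numlist (l : list nat) : term A :=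
  match l with [] => NIL | x :: l => CONS (numeral x) (numlist l) end.

Fixpoint quote (p : PR) : term A :=
  match p with
  | PZero => P_ZERO
  | PSucc => P_SUCC
  | PProj i => P_PROJ (numeral i)
  | PComp f gs => P_COMP (quote f) ((fix quote_list (l : list PR) : term A :=
       match l with [] => P_NIL | g :: l => P_CONS (quote g) (quote_list l) end) gs)
  | PPrim f g => P_PRIM (quote f) (quote g)
  | PMu f => P_MU (quote f)
  end.

Fixpoint quote_list (l : list PR) : term A :=
  match l with [] => P_NIL | g :: l => P_CONS (quote g) (quote_list l) end.

Lemma quote_comp f gs : quote (PComp f gs) = P_COMP (quote f) (quote_list gs).
Proof. reflexivity. Qed.

Lemma interp_numeral rho n : interp rho (numeral n) = Some (vN n).
Proof. induction n; simpl; rewrite ?IHn; auto. Qed.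

Lemma interp_numlist rho l : interp rho (numlist l) = Some (vL l).
Proof. induction l; simpl; rewrite ?interp_numeral, ?IHl; auto. Qed.

Lemma interp_quote rho p : interp rho (quote p) = Some (vP p).
Proof.
  induction p as [| | |f gs IHf IHgs| |] using PR_nested_ind;
    simpl; rewrite ?interp_numeral, ?IHp, ?IHp1, ?IHp2; auto.
  rewrite IHf; fold (quote_list gs).
  replace (interp rho (quote_list gs)) with (Some (vPL gs)); auto.
  induction IHgs; simpl; rewrite ?H, <- ?IHIHgs; auto.
Qed.

Lemma wft_numeral n : wft S0 (numeral n).
Proof. induction n; cbn [numeral]; wf; auto. Qed.

Lemma wft_numlist l : wft S0 (numlist l).
Proof. induction l; cbn [numlist]; wf; auto using wft_numeral. Qed.

Lemma wft_quote p : wft S0 (quote p).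
Proof.
  induction p as [| | |f gs IHf IHgs| |] using PR_nested_ind; cbn [quote]; wf;
    auto using wft_numeral.
  fold (quote_list gs); induction IHgs; cbn [quote_list]; wf; auto.
Qed.

Lemma wft_quote_list l : wft S0 (quote_list l).
Proof. induction l; cbn [quote_list]; wf; auto using wft_quote. Qed.

End Quote.

Global Hint Resolve wft_numeral wft_numlist wft_quote wft_quote_list : wft.

Ltac apply_eq e ts := refine (@teq_program_equation _ e ts _ _); [in_program_equations | wf].
Ltac rewrite_eq e ts := eapply teq_trans; [apply_eq e ts | unfold lsubst; simpl].

Lemma teq_cong1 {A} f (a a' : term A) : f < length arities -> nth f arities 0 = 1 ->
  teq S0 a a' -> teq S0 (tapp f [a]) (tapp f [a']).
Proof. intros; apply (teq_cong program_equations_wft); auto. Qed.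

Lemma teq_cong2 {A} f (a a' b b' : term A) : f < length arities -> nth f arities 0 = 2 ->
  teq S0 a a' -> teq S0 b b' -> teq S0 (tapp f [a; b]) (tapp f [a'; b']).
Proof. intros; apply (teq_cong program_equations_wft); auto. Qed.

Ltac cong1 := apply teq_cong1; [simpl; lia | reflexivity | ].
Ltac cong2 := apply teq_cong2; [simpl; lia | reflexivity | | ].
Ltac refl := apply teq_refl; wf.

Section Derivations.
Context {A : Type}.
Implicit Types (a b c : term A).

Lemma teq_search_test_cong b b' f l k : teq S0 b b' -> wft S0 f -> wft S0 l -> wft S0 k ->
  teq S0 (SEARCH_TEST b f l k) (SEARCH_TEST b' f l k).
Proof.
  intros; apply (teq_cong program_equations_wft); [simpl; lia | reflexivity |].
  repeat apply Forall2_cons; try apply Forall2_nil; auto; apply teq_refl; auto.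
Qed.

Lemma teq_copy_numeral n : teq S0 (COPY (numeral n)) (numeral (A:=A) n).
Proof.
  induction n; [apply_eq eq_copy_zero (@nil (term A))|].
  rewrite_eq eq_copy_succ [numeral (A:=A) n]; cong1; exact IHn.
Qed.

Lemma teq_chk_numeral n : teq S0 (CHK_NUM (numeral n)) (ZERO : term A).
Proof.
  induction n; [apply_eq eq_chk_num_zero (@nil (term A))|].
  rewrite_eq eq_chk_num_succ [numeral (A:=A) n]; exact IHn.
Qed.

Lemma teq_chk_numlist l : teq S0 (CHK_LIST (numlist l)) (ZERO : term A).
Proof.
  induction l as [|x l IHl]; [apply_eq eq_chk_list_nil (@nil (term A))|].
  rewrite_eq eq_chk_list_cons [numeral (A:=A) x; numlist l].
  eapply teq_trans; [cong2; [apply teq_chk_numeral | exact IHl]|].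
  apply_eq eq_and (@nil (term A)).
Qed.

Lemma teq_seq c (y : term A) n :
  teq S0 c ZERO -> teq S0 y (numeral n) -> teq S0 (SEQ c y) (numeral n).
Proof.
  intros Hc Hy; eapply teq_trans; [cong2; [exact Hc | exact Hy]|].
  rewrite_eq eq_seq [numeral (A:=A) n]; apply teq_copy_numeral.
Qed.

Lemma teq_chk_progs_quote_list gs :
  Forall (fun p => teq S0 (CHK_PROG (quote p)) (ZERO : term A)) gs ->
  teq S0 (CHK_PROGS (quote_list gs)) (ZERO : term A).
Proof.
  induction 1 as [|g gs Hg _ IH]; [apply_eq eq_chk_progs_nil (@nil (term A))|].
  rewrite_eq eq_chk_progs_cons [quote (A:=A) g; quote_list gs].
  eapply teq_trans; [cong2; [exact Hg | exact IH] | apply_eq eq_and (@nil (term A))].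
Qed.

Lemma teq_chk_prog_quote p : teq S0 (CHK_PROG (quote p)) (ZERO : term A).
Proof.
  induction p as [| |i|f gs IHf IHgs|f g IHf IHg|f IHf] using PR_nested_ind.
  - apply_eq eq_chk_prog_zero (@nil (term A)).
  - apply_eq eq_chk_prog_succ (@nil (term A)).
  - rewrite_eq eq_chk_prog_proj [numeral (A:=A) i]; apply teq_chk_numeral.
  - rewrite quote_comp; rewrite_eq eq_chk_prog_comp [quote (A:=A) f; quote_list gs].
    eapply teq_trans; [cong2; [exact IHf | apply teq_chk_progs_quote_list, IHgs]|].
    apply_eq eq_and (@nil (term A)).
  - rewrite_eq eq_chk_prog_prim [quote (A:=A) f; quote g].
    eapply teq_trans; [cong2; [exact IHf | exact IHg] | apply_eq eq_and (@nil (term A))].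
  - rewrite_eq eq_chk_prog_mu [quote (A:=A) f]; exact IHf.
Qed.

Lemma teq_halt_numeral n : teq S0 (HALT (numeral n)) (TOP : term A).
Proof.
  induction n; [apply_eq eq_halt_zero (@nil (term A))|].
  rewrite_eq eq_halt_succ [numeral (A:=A) n]; exact IHn.
Qed.

Lemma teq_nth_numlist i l : i < length l ->
  teq S0 (NTH (numeral i) (numlist l)) (numeral (A:=A) (nth i l 0)).
Proof.
  revert i; induction l as [|x l IH]; intros i Hi; simpl in Hi; [lia|].
  destruct i as [|i]; cbn [numeral numlist nth].
  - rewrite_eq eq_nth_zero [numeral (A:=A) x; numlist l].
    apply teq_seq; [apply teq_chk_numlist | refl].
  - rewrite_eq eq_nth_succ [numeral (A:=A) x; numlist l; numeral i].
    apply teq_seq; [apply teq_chk_numeral | apply IH; lia].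
Qed.

Lemma teq_search f v k n : teq S0 (EVAL (quote f) (numlist (n :: v))) (numeral (A:=A) 0) ->
  k <= n ->
  (forall j, k <= j -> j < n ->
     exists m, teq S0 (EVAL (quote f) (numlist (j :: v))) (numeral (A:=A) (S m))) ->
  teq S0 (SEARCH (quote f) (numlist v) (numeral k)) (numeral (A:=A) n).
Proof.
  intros Hn Hk Hbefore; remember (n - k) as d; revert k Heqd Hk Hbefore.
  induction d as [|d IH]; intros k Hd Hk Hbefore.
  - replace k with n by lia.
    rewrite_eq eq_search [quote (A:=A) f; numlist v; numeral n].
    eapply teq_trans; [apply teq_search_test_cong; [exact Hn | wf..]|].
    rewrite_eq eq_search_found [quote (A:=A) f; numlist v; numeral n]; apply teq_copy_numeral.
  - destruct (Hbefore k) as [m Hm]; try lia.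
    rewrite_eq eq_search [quote (A:=A) f; numlist v; numeral k].
    eapply teq_trans; [apply teq_search_test_cong; [exact Hm | wf..]|].
    rewrite_eq eq_search_next [quote (A:=A) f; numlist v; numeral k; numeral m].
    apply teq_seq; [apply teq_chk_numeral|].
    apply (IH (S k)); try lia; intros j Hj1 Hj2; apply Hbefore; lia.
Qed.

Fixpoint eval_derivable p v y (H : eval p v y) {struct H} :
  teq S0 (EVAL (quote p) (numlist v)) (numeral (A:=A) y)
with evals_derivable gs v ys (H : evals gs v ys) {struct H} :
  teq S0 (EVALS (quote_list gs) (numlist v)) (numlist (A:=A) ys).
Proof.
  - destruct H as [v|x v|i v Hi|f gs v ys y Hgs Hf|f g v y Hf|f g n v r y Hr Hg|f v n H0 Hlt].
    + rewrite_eq eq_eval_zero [numlist (A:=A) v]; apply teq_chk_numlist.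
    + rewrite_eq eq_eval_succ [numeral (A:=A) x; numlist v].
      change (SUCC (numeral x)) with (numeral (A:=A) (S x)).
      apply teq_seq; [apply teq_chk_numlist | refl].
    + rewrite_eq eq_eval_proj [numeral (A:=A) i; numlist v]; apply teq_nth_numlist, Hi.
    + rewrite quote_comp; rewrite_eq eq_eval_comp [quote (A:=A) f; quote_list gs; numlist v].
      eapply teq_trans; [cong2; [refl | exact (evals_derivable _ _ _ Hgs)]|].
      exact (eval_derivable _ _ _ Hf).
    + rewrite_eq eq_eval_prim_zero [quote (A:=A) f; quote g; numlist v].
      apply teq_seq; [apply teq_chk_prog_quote | exact (eval_derivable _ _ _ Hf)].
    + rewrite_eq eq_eval_prim_succ [quote (A:=A) f; quote g; numlist v; numeral n].
      eapply teq_trans;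
        [cong2; [refl | cong2; [refl | cong2; [exact (eval_derivable _ _ _ Hr) | refl]]]|].
      exact (eval_derivable _ _ _ Hg).
    + rewrite_eq eq_eval_mu [quote (A:=A) f; numlist v].
      change (SEARCH (quote f) (numlist v) ZERO)
        with (SEARCH (quote f) (numlist v) (numeral (A:=A) 0)).
      apply teq_search; [exact (eval_derivable _ _ _ H0) | lia |].
      intros j _ Hj; destruct (Hlt j Hj) as [m Hm]; exists m; exact (eval_derivable _ _ _ Hm).
  - destruct H as [v|g gs v y ys Hg Hgs].
    + rewrite_eq eq_evals_nil [numlist (A:=A) v].
      eapply teq_trans; [cong1; apply teq_chk_numlist | apply_eq eq_nil_if (@nil (term A))].
    + rewrite_eq eq_evals_cons [quote (A:=A) g; quote_list gs; numlist v].
      cong2; [exact (eval_derivable _ _ _ Hg) | exact (evals_derivable _ _ _ Hgs)].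
Qed.

End Derivations.

(** * Computing codes of reductions *)

Ltac eval_step :=
  first [ apply ev_zero | apply ev_succ | apply ev_proj; simpl; lia
        | eapply ev_comp | apply evs_nil | eapply evs_cons ].

Fixpoint p_const (k : nat) : PR := match k with 0 => PZero | S k => PComp PSucc [p_const k] end.

Lemma eval_p_const v k : eval (p_const k) v k.
Proof. induction k; simpl; repeat eval_step; eauto. Qed.

Definition p_succ (a : PR) : PR := PComp PSucc [a].

Lemma eval_p_succ a v y : eval a v y -> eval (p_succ a) v (S y).
Proof. intros; repeat eval_step; eauto. Qed.

Definition p_add : PR := PPrim (PProj 0) (PComp PSucc [PProj 1]).

Lemma eval_p_add a b : eval p_add [a; b] (a + b).
Proof.
  induction a as [|a IH]; simpl.
  - constructor; eval_step.
  - eapply ev_primS; [exact IH|]; repeat eval_step.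
Qed.

Definition p_triangle : PR := PPrim PZero (PComp p_add [PProj 1; PComp PSucc [PProj 0]]).

Lemma eval_p_triangle s : eval p_triangle [s] (s * (s + 1) / 2).
Proof.
  assert (Hstep : forall n, n * (n + 1) / 2 + S n = S n * (S n + 1) / 2)
    by (intros n; rewrite <- Nat.div_add by lia; f_equal; nia).
  induction s as [|s IH]; [repeat constructor|].
  eapply ev_primS; [exact IH|]; rewrite <- Hstep.
  eapply ev_comp; [repeat eval_step | apply eval_p_add].
Qed.

Definition p_cpair : PR :=
  PComp p_add [PComp p_triangle [PComp p_add [PProj 0; PProj 1]]; PProj 1].

Lemma eval_p_cpair x y : eval p_cpair [x; y] (cpair x y).
Proof.
  eapply ev_comp; [|apply eval_p_add].
  repeat eval_step; [| apply eval_p_triangle]; repeat eval_step; apply eval_p_add.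
Qed.

Definition p_pair (a b : PR) : PR := PComp p_cpair [a; b].

Lemma eval_p_pair a b v x y : eval a v x -> eval b v y -> eval (p_pair a b) v (cpair x y).
Proof. intros; eapply ev_comp; [repeat eval_step; eauto | apply eval_p_cpair]. Qed.

(* [code] on the shapes needed below, from the codes of the arguments: [f(a)], [f(a, b)] and
   [rrule i [a]]. *)
Definition code_app1 (f a : nat) : nat := cpair 1 (cpair f (S (cpair a 0))).
Definition code_app2 (f a b : nat) : nat := cpair 1 (cpair f (S (cpair a (S (cpair b 0))))).
Definition code_rule1 (i a : nat) : nat := cpair 2 (cpair i (S (cpair a 0))).

Fixpoint code_numeral (n : nat) : nat :=
  match n with 0 => cpair 1 (cpair 0 0) | S n => code_app1 1 (code_numeral n) end.

Definition code_halt_term (t x : nat) : nat :=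
  code_app1 22 (code_app2 12 t (code_app2 3 (code_numeral x) (cpair 1 (cpair 2 0)))).

Definition code_gate_rules (t x : nat) : nat :=
  cpair (code_rule1 0 (code_halt_term t x)) (code_rule1 1 (code_halt_term t x)).

Definition halt_term {A} (p : PR) (v : list nat) : term A := HALT (EVAL (quote p) (numlist v)).

Section Codes.
Variables (O : Type) (enc : O -> nat).

Lemma code_numeral_spec n : code enc (ofterm (numeral (A:=O) n)) = code_numeral n.
Proof.
  induction n as [|n IH]; [reflexivity|].
  cbn [numeral ofterm map code]; rewrite IH; reflexivity.
Qed.

Lemma code_gate_rules_spec p x :
  cpair (code enc (gate_rule 0 (halt_term (A:=O) p [x])))
        (code enc (gate_rule 1 (halt_term (A:=O) p [x])))
  = code_gate_rules (code enc (ofterm (quote (A:=O) p))) x.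
Proof.
  cbn [gate_rule halt_term numlist ofterm map code]; rewrite code_numeral_spec.
  unfold code_gate_rules, code_rule1, code_halt_term, code_app1, code_app2; reflexivity.
Qed.

End Codes.

Definition p_app1 (f : nat) (a : PR) : PR :=
  p_pair (p_const 1) (p_pair (p_const f) (p_succ (p_pair a (p_const 0)))).
Definition p_app2 (f : nat) (a b : PR) : PR :=
  p_pair (p_const 1) (p_pair (p_const f) (p_succ (p_pair a (p_succ (p_pair b (p_const 0)))))).
Definition p_rule1 (i : nat) (a : PR) : PR :=
  p_pair (p_const 2) (p_pair (p_const i) (p_succ (p_pair a (p_const 0)))).

Ltac eval_code := repeat first
  [ apply eval_p_pair | apply eval_p_succ | apply ev_zero | apply eval_p_const
  | apply ev_proj; simpl; lia ].

Definition p_code_numeral : PR :=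
  PComp (PPrim (p_const (code_numeral 0)) (p_app1 1 (PProj 1))) [PProj 0].

Lemma eval_p_code_numeral x : eval p_code_numeral [x] (code_numeral x).
Proof.
  eapply ev_comp; [repeat eval_step|].
  induction x as [|x IH]; [constructor; apply eval_p_const|].
  eapply ev_primS; [exact IH|]; cbn [code_numeral]; unfold p_app1, code_app1; eval_code.
Qed.

Definition p_code_gate_rules : PR :=
  let p_halt := p_app1 22 (p_app2 12 (PProj 0)
                  (p_app2 3 p_code_numeral (p_const (cpair 1 (cpair 2 0))))) in
  p_pair (p_rule1 0 p_halt) (p_rule1 1 p_halt).

Lemma eval_p_code_gate_rules x : eval p_code_gate_rules [x] (code_gate_rules x x).
Proof.
  unfold p_code_gate_rules, p_rule1, p_app1, p_app2; eval_code; apply eval_p_code_numeral.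
Qed.

(** * Undecidability *)

Lemma genpos_empty_objects S (p : red Empty_set) : typed S p -> genpos S p.
Proof.
  split; auto; intros q k k' _ _ _ [l' [_ [Hin Hlen]]].
  destruct l' as [|[]]; simpl in Hlen; lia.
Qed.

Definition halts (p : PR) (v : list nat) : Prop := exists y, eval p v y.

Lemma hastype_gate_rule {A} i (u : term A) : i < 2 -> wft S0 u ->
  hastype S0 (gate_rule i u) (GATE u) (GATE u).
Proof.
  intros Hi Hu.
  refine (ht_rule (n := 1) (l := GATE (V 0)) (r := GATE (V 0)) (rs := [ofterm u])
            (ss := [u]) (ts := [u]) i _ eq_refl
            (hts_cons (hastype_ofterm _ _ Hu) (hts_nil _))).
  destruct i as [|[|]]; simpl; auto; lia.
Qed.

Lemma S0_wf : WF2S S0.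
Proof.
  split; [|split].
  - exact program_equations_wft.
  - intros n l r H; simpl in H; destruct H as [H|[H|[]]]; inversion H; subst;
      repeat split; try (simpl; lia); intros k [<-|[]]; lia.
  - intros l r [[= <- <-]|[]].
    exists (GATE TOP), (GATE TOP); split; apply hastype_gate_rule; try lia; wf.
Qed.

Lemma interp_halt_term {A} rho p v :
  interp rho (halt_term (A:=A) p v) = match run p v with Some _ => Some vTop | None => None end.
Proof.
  unfold halt_term; cbn [interp map]; rewrite interp_quote, interp_numlist; simpl.
  destruct (run p v); auto.
Qed.

Lemma req_gate_rules_halts {A} p v :
  req S0 (gate_rule 0 (halt_term (A:=A) p v)) (gate_rule 1 (halt_term p v)) -> halts p v.
Proof.
  intros H; destruct (req_invariant H (fun _ => None)) as [E _].
  cbn [gate_rule tau1_parity] in E; rewrite syn_src_ofterm, interp_halt_term in E.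
  destruct (run p v) as [y|] eqn:R; [exists y; apply run_spec, R | discriminate].
Qed.

Lemma req_gate_rule_cong {A} i (u u' : term A) : i < 2 -> teq S0 u u' ->
  req S0 (gate_rule i u) (gate_rule i u').
Proof.
  intros Hi H; destruct (teq_wft program_equations_wft H) as [Wu Wu'].
  assert (HG : teq S0 (GATE u') (GATE u)) by (cong1; apply teq_sym, H).
  apply (req_rule (i := i) [] [] (req_ofterm program_equations_wft H)
           (hastype_gate_rule _ Hi Wu)).
  eapply ht_conv; [apply (hastype_gate_rule _ Hi Wu') | exact HG | exact HG].
Qed.

Lemma req_gate_rules_top {A} : req S0 (gate_rule 0 (TOP : term A)) (gate_rule 1 TOP).
Proof.
  apply (req_ax (s := GATE TOP) (t := GATE TOP));
    [| apply hastype_gate_rule; try lia; wf ..].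
  apply (ax_user S0 (gate_rule 0 TOP) (gate_rule 1 TOP) (fun _ => ZERO));
    [left; reflexivity | intros; wf].
Qed.

Lemma halts_req_gate_rules {A} p v :
  halts p v -> req S0 (gate_rule 0 (halt_term (A:=A) p v)) (gate_rule 1 (halt_term p v)).
Proof.
  intros [y Hy].
  assert (Htop : teq S0 (halt_term (A:=A) p v) TOP).
  { eapply teq_trans; [cong1; apply (eval_derivable Hy)|].
    apply teq_halt_numeral. }
  eapply req_trans; [exact (req_gate_rule_cong (i := 0) ltac:(lia) Htop)|].
  eapply req_trans; [exact req_gate_rules_top|].
  exact (req_sym (req_gate_rule_cong (i := 1) ltac:(lia) Htop)).
Qed.

Lemma no_self_halting_decider (c : PR -> nat) (F : nat -> nat) (pF dec : PR) :
  (forall x, eval pF [x] (F x)) ->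
  ~ (forall p, (halts p [c p] -> eval dec [F (c p)] 1) /\
               (~ halts p [c p] -> eval dec [F (c p)] 0)).
Proof.
  intros HF Hdec.
  set (diag := PMu (PComp dec [PComp pF [PProj 1]])).
  assert (Hdiag : forall x, halts diag [x] <-> eval dec [F x] 0).
  { intros x.
    assert (HFx : forall n, evals [PComp pF [PProj 1]] [n; x] [F x])
      by (intros n; repeat eval_step; apply HF).
    split.
    - intros [n Hn]; inversion Hn as [| | | | | |? ? ? Hzero _]; subst.
      inversion Hzero as [| | |? ? ? ys ? Hys Hdec0| | |]; subst.
      rewrite <- (evals_det (HFx n) Hys) in Hdec0; exact Hdec0.
    - intros H0; exists 0; constructor; [econstructor; eauto | intros; lia]. }
  destruct (Hdec diag) as [H1 H0].
  destruct (classic (halts diag [c diag])) as [Hh|Hh].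
  - pose proof (eval_det (H1 Hh) (proj1 (Hdiag _) Hh)); discriminate.
  - exact (Hh (proj2 (Hdiag _) (H0 Hh))).
Qed.

Theorem theorem3p2 : exists S : FP2S, WF2S S /\ ~ LambekCoherent S.
Proof.
  exists S0; split; [exact S0_wf|]; intros Hcoh.
  set (enc := fun e : Empty_set => match e with end : nat).
  destruct (Hcoh Empty_set enc) as [dec Hdec]; [intros []|].
  apply (no_self_halting_decider (fun p => code enc (ofterm (quote p)))
           (fun x => code_gate_rules x x) (dec := dec) eval_p_code_gate_rules).
  intros p; set (u := halt_term (A:=Empty_set) p [code enc (ofterm (quote p))]).
  assert (Hty : forall i, i < 2 -> hastype S0 (gate_rule i u) (GATE u) (GATE u))
    by (intros i Hi; apply hastype_gate_rule; [exact Hi | unfold u, halt_term; wf]).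
  assert (Hgp : forall i, i < 2 -> genpos S0 (gate_rule i u))
    by (intros i Hi; apply genpos_empty_objects; exists (GATE u), (GATE u); apply Hty, Hi).
  destruct (Hdec _ _ _ _ (Hgp 0 ltac:(lia)) (Hgp 1 ltac:(lia)) (Hty 0 ltac:(lia))
              (Hty 1 ltac:(lia))) as [Hreq Hneq].
  unfold u in Hreq, Hneq; rewrite code_gate_rules_spec in Hreq, Hneq.
  split; intros H.
  - apply Hreq, halts_req_gate_rules, H.
  - apply Hneq; intros Hr; apply H, (req_gate_rules_halts Hr).
Qed.
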